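(* Let $\mathcal{C}$ be a $\mathbb{Z}_3\mathbb{Z}_9$-additive code of type $(\alpha,\beta;\gamma,\delta;\kappa)$ and let $C=\Phi(\mathcal{C})$, a code of length $n=\alpha+3\beta$ over $\mathbb{Z}_3$. Then: (i) If $\mathbf{u}_1,\ldots,\mathbf{u}_\gamma$ (of order $3$) and $\mathbf{v}_1,\ldots,\mathbf{v}_\delta$ (of order $9$) are the rows of a generator matrix of $\mathcal{C}$, then $\langle C\rangle$ is generated by $\{\Phi(\mathbf{u}_i)\}_{i=1}^\gamma$, $\{\Phi(\mathbf{v}_j)\}_{j=1}^\delta$, $\{\Phi(3\mathbf{v}_k*\mathbf{v}_l)\}_{1\le l\le k\le\delta}$ and $\{\Phi(3\mathbf{v}_x*\mathbf{v}_y*\mathbf{v}_z)\}_{1\le x\le y\le z\le\delta}$. (ii) $\mathrm{rank}(C)\in\left\{\gamma+2\delta,\ldots,\min\left(\beta+\delta+\kappa,\ \gamma+\delta+\binom{\delta+1}{2}+\binom{\delta+2}{3}\right)\right\}$; equivalently, writing $\mathrm{rank}(C)=\gamma+2\delta+\bar r$, we have $\bar r\in\left\{0,1,\ldots,\min\left(\beta-(\gamma-\kappa)-\delta,\ \binom{\delta+1}{2}+\binom{\delta+2}{3}-\delta\right)\right\}$. (iii) The linear code $\langle C\rangle$ over $\mathbb{Z}_3$ is $\mathbb{Z}_3\mathbb{Z}_9$-linear, i.e. $\langle C\rangle=\Phi(\mathcal{D})$ for some $\mathbb{Z}_3\mathbb{Z}_9$-additive code $\mathcal{D}\subseteq\m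athbb{Z}_3^\alpha\times\mathbb{Z}_9^\beta$.
   Context: A $\mathbb{Z}_3\mathbb{Z}_9$-additive code $\mathcal{C}$ is a subgroup of $\mathbb{Z}_3^\alpha\times\mathbb{Z}_9^\beta$ ($\alpha+\beta>0$). As an abelian group $\mathcal{C}\cong\mathbb{Z}_3^\gamma\times\mathbb{Z}_9^\delta$. Let $\mathcal{C}_3$ be the subcode of codewords of order dividing $3$, and $\kappa$ the dimension over $\mathbb{Z}_3$ of the projection of $\mathcal{C}_3$ onto the first $\alpha$ coordinates; then $\mathcal{C}$ is said to be of type $(\alpha,\beta;\gamma,\delta;\kappa)$. A generator matrix of $\mathcal{C}$ has rows $\mathbf{u}_1,\ldots,\mathbf{u}_\gamma$ of order $3$ and $\mathbf{v}_1,\ldots,\mathbf{v}_\delta$ of order $9$ such that every codeword is uniquely $\sum\lambda_i\mathbf{u}_i+\sum\nu_j\mathbf{v}_j$ with $\lambda_i\in\mathbb{Z}_3$, $\nu_j\in\mathbb{Z}_9$. The Gray map $\phi:\mathbb{Z}_9\to\mathbb{Z}_3^3$ is $\phi(\theta)=\theta''(1,1,1)+\theta'(0,1,2)$ where $\theta=3\theta''+\theta'$, $\theta',\theta''\in\{0,1,2\}$, and $\Phi(\mathbf{x},\mathbf{y})=(\mathbf{x},\phi(y_1),\ldots,\phi(y_\beta))$; $C=\Phi(\mathcal{C})$ is a $\mathbb{Z}_3\mathbb{Z}_9$-linear code. $*$ denotes the componentwise product (in $\mathbb{Z}_3$ on the first $\alpha$ coordinates and in $\mathbb{Z}_9$ on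 the last $\beta$), and $3\mathbf{w}$ multiplies every coordinate by $3$ (so the first $\alpha$ coordinates become $0$). $\langle C\rangle$ is the $\mathbb{Z}_3$-linear span of $C$ and $\mathrm{rank}(C)=\dim_{\mathbb{Z}_3}\langle C\rangle$. *)

From HB Require Import structures.
From mathcomp Require Import all_boot all_order all_algebra.
Set Implicit Arguments. Unset Strict Implicit. Unset Printing Implicit Defensive.
Import Order.TTheory GRing.Theory Num.Theory.
Local Open Scope ring_scope.

Definition amb (a b : nat) := ('rV['F_3]_a * 'rV['Z_9]_b)%type.

Definition is_additive_code (a b : nat) (C : {set amb a b}) : Prop :=
  (0 : amb a b) \in C /\ (forall x y, x \in C -> y \in C -> x - y \in C).

Definition order3 (a b : nat) (w : amb a b) : Prop := w != 0 /\ w *+ 3 = 0.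
Definition order9 (a b : nat) (w : amb a b) : Prop := w *+ 3 != 0 /\ w *+ 9 = 0.

Definition sub3 (a b : nat) (C : {set amb a b}) : {set amb a b} :=
  [set c in C | c *+ 3 == 0].

Definition kappa_of (a b : nat) (C : {set amb a b}) : nat :=
  \dim <<[seq c.1 | c <- enum (sub3 C)]>>%VS.

Definition has_type (a b g d k : nat) (C : {set amb a b}) : Prop :=
  [/\ is_additive_code C,
      exists f : 'rV['F_3]_g * 'rV['Z_9]_d -> amb a b,
        [/\ forall x y, f (x + y) = f x + f y, injective f & f @: setT = C]
    & k = kappa_of C].

Definition comb (a b g d : nat) (u : 'I_g -> amb a b) (v : 'I_d -> amb a b)
  (p : {ffun 'I_g -> 'Z_3} * {ffun 'I_d -> 'Z_9}) : amb a b :=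
  \sum_(i < g) u i *+ p.1 i + \sum_(j < d) v j *+ p.2 j.

Definition is_gen_matrix (a b g d : nat) (C : {set amb a b})
  (u : 'I_g -> amb a b) (v : 'I_d -> amb a b) : Prop :=
  [/\ forall i, order3 (u i), forall j, order9 (v j),
      injective (comb u v) & comb u v @: setT = C].

(* Gray map phi : Z_9 -> Z_3^3, phi(3t''+t') = t''(1,1,1) + t'(0,1,2) *)
Definition phi (t : 'Z_9) : 'rV['F_3]_3 :=
  \row_(k < 3) (((t %/ 3)%N)%:R + ((t %% 3)%N)%:R * (k : nat)%:R).

Lemma divord_proof (b : nat) (j : 'I_(3 * b)) : (j %/ 3 < b)%N.
Proof. case: j => j /= h; rewrite ltn_divLR //; by rewrite mulnC. Qed.
Definition divord (b : nat) (j : 'I_(3 * b)) : 'I_b := Ordinal (divord_proof j).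
Definition modord (b : nat) (j : 'I_(3 * b)) : 'I_3 := Ordinal (@ltn_pmod j 3 isT).

(* Phi(x, y) = (x, phi(y_1), ..., phi(y_b)); coordinate a + 3m + r of the
   image is coordinate r of phi(y_m) *)
Definition Phi (a b : nat) (w : amb a b) : 'rV['F_3]_(a + 3 * b) :=
  row_mx w.1 (\row_(j < 3 * b) phi (w.2 0 (divord j)) 0 (modord j)).

Definition cwmul (a b : nat) (w1 w2 : amb a b) : amb a b :=
  (map2_mx *%R w1.1 w2.1, map2_mx *%R w1.2 w2.2).

Definition rank3 (n : nat) (C : {set 'rV['F_3]_n}) : nat := \dim <<enum C>>%VS.

Definition Phi_code (a b : nat) (C : {set amb a b}) : {set 'rV['F_3]_(a + 3 * b)} :=
  [set Phi c | c in C].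

From HB Require Import structures.
From mathcomp Require Import all_boot all_order all_algebra finfield.
From mathcomp Require Import ring zify.
Import Order.TTheory GRing.Theory Num.Theory.
Set Implicit Arguments. Unset Strict Implicit. Unset Printing Implicit Defensive.

(* The Gray map is additive up to a carry: Phi x + Phi y = Phi (x + y + carry x y), where
   carry x y = 3 (x*y + x*x*y + x*y*y) has order dividing 3, and Phi is additive on such
   words.  Hence the span <C> contains Phi (carry x y) for all codewords x, y and, by
   polarization, every Phi (3 x*y) and Phi (3 x*y*z).  Conversely, 3 x*y and 3 x*y*z are
   symmetric, additive in each argument and vanish on words of order 3, so on codewords
   they reduce to 3 v_k*v_l and 3 v_x*v_y*v_z; together with Phi (u_i) and Phi (v_j) these
   span every Phi c, which is (i).  Counting this family, and splitting each generator into
   its Z_3 part plus the image of a 3-torsion word with zero Z_3 part, bounds the rank from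
   above; |C| = 3^(g+2d) and the injectivity of Phi bound it from below.  For (iii), every
   element of <C> is Phi (c + t) with c a codeword and t a 3-torsion word with Phi t in <C>,
   so the preimage of <C> under Phi is a subgroup. *)

(** * Monotone pairs and triples *)

Lemma sum_bin_diag n k : \sum_(l < n) 'C(l + k, k) = 'C(n + k, k.+1).
Proof.
elim: n => [|n IH]; first by rewrite big_ord0 bin_small.
by rewrite big_ord_recr /= IH addSn binS.
Qed.

Lemma sum_ord_leq d (k : 'I_d) (F : nat -> nat) :
  \sum_(l < d | l <= k) F l = \sum_(l < k.+1) F l.
Proof. exact: (big_ord_narrow (F := F) (ltn_ord k)). Qed.

Lemma sum1_ord_leq d (k : 'I_d) : \sum_(l < d | l <= k) 1 = 'C(k + 1, 1).
Proof. by rewrite (sum_ord_leq k (fun=> 1)) sum1_card card_ord bin1 addn1. Qed.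

Lemma card_leq_pairs d : #|[set kl : 'I_d * 'I_d | kl.2 <= kl.1]| = 'C(d.+1, 2).
Proof.
have -> : #|[set kl : 'I_d * 'I_d | kl.2 <= kl.1]| = \sum_(k < d) \sum_(l < d | l <= k) 1.
  by rewrite pair_big_dep sum1dep_card; apply: eq_card => kl; rewrite !inE.
by rewrite -[d.+1]addn1 -sum_bin_diag; apply: eq_bigr => k _; rewrite sum1_ord_leq.
Qed.

Lemma card_leq_triples d :
  #|[set xyz : 'I_d * 'I_d * 'I_d | (xyz.1.1 <= xyz.1.2) && (xyz.1.2 <= xyz.2)]| =
  'C(d.+2, 3).
Proof.
have -> : #|[set xyz : 'I_d * 'I_d * 'I_d | (xyz.1.1 <= xyz.1.2) && (xyz.1.2 <= xyz.2)]| =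
    \sum_(xy : 'I_d * 'I_d | xy.1 <= xy.2) \sum_(z < d | xy.2 <= z) 1.
  by rewrite pair_big_dep sum1dep_card; apply: eq_card => p; rewrite !inE.
rewrite (exchange_big_dep xpredT) //= -[d.+2]addn2 -sum_bin_diag; apply: eq_bigr => z _.
have -> : \sum_(xy : 'I_d * 'I_d | (xy.1 <= xy.2) && (xy.2 <= z)) 1 =
    \sum_(x < d) \sum_(y < d | (x <= y) && (y <= z)) 1.
  by rewrite pair_big_dep.
rewrite (exchange_big_dep (fun y : 'I_d => y <= z)) => [|x y _ /andP []//] /=.
rewrite addn2 -[z.+2]addn1 -sum_bin_diag -(sum_ord_leq z (fun y => 'C(y + 1, 1))).
apply: eq_bigr => y yz; rewrite -sum1_ord_leq.
by apply: eq_bigl => x; rewrite yz andbT.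
Qed.

Local Open Scope ring_scope.

(** * The Gray map on Z_9 *)

Lemma Z9_exhaust (P : 'Z_9 -> bool) : all (fun i => P i%:R) (iota 0 9) -> forall s, P s.
Proof. by move=> /allP H s; rewrite -(natr_Zp s) H // mem_iota ltn_ord. Qed.

Lemma Z9_exhaust2 (P : 'Z_9 -> 'Z_9 -> bool) :
  all (fun i => all (fun j => P i%:R j%:R) (iota 0 9)) (iota 0 9) -> forall s t, P s t.
Proof.
move=> H s; apply: Z9_exhaust.
exact: (Z9_exhaust (P := fun s => all (fun j => P s j%:R) (iota 0 9)) H).
Qed.

Lemma Z9_exhaust3 (P : 'Z_9 -> 'Z_9 -> 'Z_9 -> bool) :
  all (fun i => all (fun j => all (fun k => P i%:R j%:R k%:R) (iota 0 9)) (iota 0 9))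
    (iota 0 9) ->
  forall s t w, P s t w.
Proof.
move=> H s; apply: Z9_exhaust2.
exact: (Z9_exhaust (P := fun s => all (fun j => all (fun k => P s j%:R k%:R) _) _) H).
Qed.

Lemma Z9_torsionE (s : 'Z_9) : s *+ 3 = 0 -> s = 3%:R *+ (s %/ 3).
Proof.
have H : (s *+ 3 == 0) ==> (s == 3%:R *+ (s %/ 3)) by move: s; apply: Z9_exhaust; vm_compute.
by move=> /eqP /(implyP H) /eqP.
Qed.

Lemma Z9_mul9 (s : 'Z_9) : s *+ 9 = 0.
Proof. by rewrite -mulr_natr pchar_Zp ?mulr0. Qed.

Lemma F3_mul3 (s : 'F_3) : s *+ 3 = 0.
Proof. by rewrite -mulr_natr pchar_Fp_0 ?mulr0. Qed.

Lemma phiE (t : 'Z_9) (k : 'I_3) : phi t 0 k = ((t %/ 3)%N + (t %% 3)%N * k)%:R.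
Proof. by rewrite mxE natrD natrM. Qed.

Lemma phiD (s t : 'Z_9) :
  phi s + phi t = phi (s + t + (s * t + s * s * t + s * t * t) *+ 3).
Proof.
apply/rowP => k; rewrite mxE !phiE; apply/eqP.
by case: k => [[|[|[|//]]] /= _]; move: s t; apply: Z9_exhaust2; vm_compute.
Qed.

Lemma phiD_torsion (s t : 'Z_9) : s *+ 3 = 0 -> phi (s + t) = phi s + phi t.
Proof.
move=> s3; rewrite phiD.
have -> : (s * t + s * s * t + s * t * t) *+ 3 = s *+ 3 * (t + s * t + t * t) by ring.
by rewrite s3 mul0r addr0.
Qed.

Lemma phi_inj : injective phi.
Proof.
have key (s t : 'Z_9) : (phi s 0 0 == phi t 0 0) ==> (phi s 0 1 == phi t 0 1) ==> (s == t).
  by rewrite !phiE; move: s t; apply: Z9_exhaust2; vm_compute.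
by move=> s t e; apply/eqP; move: (key s t); rewrite e !eqxx.
Qed.

(** * Componentwise products and carries in Z_3^a x Z_9^b *)

Section Ambient.
Variables a b : nat.
Local Notation A := (amb a b).
Implicit Types x y z w : A.

Lemma amb_eq x y : x.1 = y.1 -> (forall m, x.2 0 m = y.2 0 m) -> x = y.
Proof. by case: x y => [x1 x2] [y1 y2] /= -> e; congr pair; apply/rowP. Qed.

Lemma fstD x y : (x + y).1 = x.1 + y.1. Proof. by []. Qed.
Lemma sndD x y : (x + y).2 = x.2 + y.2. Proof. by []. Qed.

Lemma fst_mul3 x : (x *+ 3).1 = 0.
Proof. by apply/rowP => i; rewrite raddfMn mulmxnE F3_mul3 mxE. Qed.

Lemma fst_mulrnE x n : (x *+ n).1 = x.1 *+ n.
Proof. exact: raddfMn. Qed.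

Lemma snd_addE x y m : (x + y).2 0 m = x.2 0 m + y.2 0 m.
Proof. by rewrite sndD mxE. Qed.

Lemma fst_sum I r (P : pred I) (F : I -> A) :
  (\sum_(i <- r | P i) F i).1 = \sum_(i <- r | P i) (F i).1.
Proof. exact: (big_morph _ fstD). Qed.

Lemma snd_sumE I r (P : pred I) (F : I -> A) m :
  (\sum_(i <- r | P i) F i).2 0 m = \sum_(i <- r | P i) (F i).2 0 m.
Proof. by apply: (big_morph (fun x : A => x.2 0 m) (fun x y => snd_addE x y m)); rewrite mxE. Qed.

Lemma snd_mulrnE x n m : (x *+ n).2 0 m = x.2 0 m *+ n.
Proof. by rewrite raddfMn mulmxnE. Qed.

Lemma amb_mul9 x : x *+ 9 = 0.
Proof.
apply: amb_eq => [|m]; last by rewrite snd_mulrnE Z9_mul9 mxE.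
by rewrite -[9%N]/(3 * 3)%N mulrnA fst_mul3.
Qed.

Definition prod2 x y : A := cwmul x y *+ 3.
Definition prod3 x y z : A := cwmul (cwmul x y) z *+ 3.
Definition carry x y : A := prod2 x y + prod3 x x y + prod3 x y y.

Lemma prod2E x y m : (prod2 x y).2 0 m = (x.2 0 m * y.2 0 m) *+ 3.
Proof. by rewrite snd_mulrnE mxE. Qed.

Lemma prod3E x y z m : (prod3 x y z).2 0 m = (x.2 0 m * y.2 0 m * z.2 0 m) *+ 3.
Proof. by rewrite snd_mulrnE !mxE. Qed.

Lemma carryE x y :
  carry x y = (cwmul x y + cwmul (cwmul x x) y + cwmul (cwmul x y) y) *+ 3.
Proof. by rewrite /carry /prod2 /prod3 !mulrnDl. Qed.

Lemma carry_fst x y : (carry x y).1 = 0.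
Proof. by rewrite carryE fst_mul3. Qed.

Lemma carry_snd x y m : (carry x y).2 0 m =
  (x.2 0 m * y.2 0 m + x.2 0 m * x.2 0 m * y.2 0 m + x.2 0 m * y.2 0 m * y.2 0 m) *+ 3.
Proof. by rewrite carryE snd_mulrnE !sndD !mxE. Qed.

Lemma carry_mul3 x y : carry x y *+ 3 = 0.
Proof. by rewrite carryE -mulrnA amb_mul9. Qed.

Lemma Phi_addE x y w : w.1 = 0 ->
    (forall m, phi (x.2 0 m) + phi (y.2 0 m) = phi (x.2 0 m + y.2 0 m + w.2 0 m)) ->
  Phi x + Phi y = Phi (x + y + w).
Proof.
move=> w1 w2; rewrite /Phi add_row_mx !fstD w1 addr0; congr row_mx.
by apply/rowP => j; have /rowP/(_ (modord j)) := w2 (divord j); rewrite !sndD !mxE.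
Qed.

Lemma Phi_add x y : Phi x + Phi y = Phi (x + y + carry x y).
Proof. by apply: Phi_addE => [|m]; rewrite ?carry_fst // carry_snd phiD. Qed.

Lemma PhiD_torsion x y : x *+ 3 = 0 -> Phi (x + y) = Phi x + Phi y.
Proof.
move=> x3; rewrite -[x + y]addr0; apply/esym/Phi_addE => // m.
by rewrite mxE addr0 phiD_torsion // -snd_mulrnE x3 mxE.
Qed.

Lemma PhiD x y : Phi (x + y) = Phi x + Phi y - Phi (carry x y).
Proof.
by rewrite Phi_add (addrC (x + y)) (PhiD_torsion _ (carry_mul3 x y)) addrAC subrr add0r.
Qed.

Lemma Phi_split x : Phi x = row_mx x.1 0 + Phi ((0, x.2) : A).
Proof. by rewrite /Phi add_row_mx addr0 add0r. Qed.

Lemma Phi0 : Phi (0 : A) = 0.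
Proof. by apply: (addrI (Phi 0)); rewrite -PhiD_torsion ?mul0rn // !addr0. Qed.

Lemma divord_rshift (m : 'I_b) (k : 'I_3) : (3 * m + k < 3 * b)%N.
Proof. have := ltn_ord m; have := ltn_ord k; lia. Qed.

Lemma Phi_inj : injective (@Phi a b).
Proof.
move=> x y /eq_row_mx [e1 /rowP e2]; apply: amb_eq => // m; apply: phi_inj.
apply/rowP => k; have := e2 (Ordinal (divord_rshift m k)); rewrite !mxE.
have -> : divord (Ordinal (divord_rshift m k)) = m.
  by apply/val_inj => /=; have := ltn_ord k; lia.
have -> : modord (Ordinal (divord_rshift m k)) = k.
  by apply/val_inj => /=; have := ltn_ord k; lia.
by [].
Qed.

Lemma prod2_fst x y : (prod2 x y).1 = 0. Proof. exact: fst_mul3. Qed.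
Lemma prod3_fst x y z : (prod3 x y z).1 = 0. Proof. exact: fst_mul3. Qed.

Lemma prod2_mul3 x y : prod2 x y *+ 3 = 0.
Proof. by rewrite -mulrnA amb_mul9. Qed.

Lemma prod3_mul3 x y z : prod3 x y z *+ 3 = 0.
Proof. by rewrite -mulrnA amb_mul9. Qed.

Lemma prod2C x y : prod2 x y = prod2 y x.
Proof. by apply: amb_eq => [|m]; rewrite ?prod2_fst // !prod2E mulrC. Qed.

Lemma prod2Dl x x' y : prod2 (x + x') y = prod2 x y + prod2 x' y.
Proof.
apply: amb_eq => [|m]; first by rewrite prod2_fst fstD !prod2_fst addr0.
by rewrite prod2E snd_addE [RHS]snd_addE !prod2E mulrDl mulrnDl.
Qed.

Lemma prod2_torsion x y : x *+ 3 = 0 -> prod2 x y = 0.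
Proof.
move=> x3; apply: amb_eq => [|m]; first by rewrite prod2_fst.
by rewrite prod2E -mulrnAl -snd_mulrnE x3 !mxE mul0r.
Qed.

Lemma prod3C12 x y z : prod3 x y z = prod3 y x z.
Proof. by apply: amb_eq => [|m]; rewrite ?prod3_fst // !prod3E (mulrC (x.2 0 m)). Qed.

Lemma prod3C23 x y z : prod3 x y z = prod3 x z y.
Proof. by apply: amb_eq => [|m]; rewrite ?prod3_fst // !prod3E mulrAC. Qed.

Lemma prod3Dl x x' y z : prod3 (x + x') y z = prod3 x y z + prod3 x' y z.
Proof.
apply: amb_eq => [|m]; first by rewrite prod3_fst fstD !prod3_fst addr0.
by rewrite prod3E snd_addE [RHS]snd_addE !prod3E !mulrDl mulrnDl.
Qed.

Lemma prod3_torsion x y z : x *+ 3 = 0 -> prod3 x y z = 0.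
Proof.
move=> x3; apply: amb_eq => [|m]; first by rewrite prod3_fst.
by rewrite prod3E -!mulrnAl -snd_mulrnE x3 !mxE !mul0r.
Qed.

(* Polarization identities: coordinatewise they hold because 9 = 0 in Z_9. *)
Lemma prod2_carry x y : prod2 x y = carry x (y *+ 2) + carry (x *+ 2) y.
Proof.
apply: amb_eq => [|m]; first by rewrite prod2_fst fstD !carry_fst addr0.
rewrite prod2E snd_addE !carry_snd !snd_mulrnE; apply/eqP.
by move: (x.2 0 m) (y.2 0 m); apply: Z9_exhaust2; vm_compute.
Qed.

Lemma prod3_carry x y : prod3 x x y = (carry x y + carry (x *+ 2) y) *+ 2.
Proof.
apply: amb_eq => [|m]; first by rewrite prod3_fst fst_mulrnE fstD !carry_fst addr0 mul0rn.
rewrite prod3E snd_mulrnE snd_addE !carry_snd !snd_mulrnE; apply/eqP.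
by move: (x.2 0 m) (y.2 0 m); apply: Z9_exhaust2; vm_compute.
Qed.

Lemma prod3_polar x y z :
  prod3 x y z = (prod3 (x + y) (x + y) z + (prod3 x x z + prod3 y y z) *+ 2) *+ 2.
Proof.
apply: amb_eq => [|m].
  by rewrite prod3_fst fst_mulrnE fstD prod3_fst fst_mulrnE fstD !prod3_fst !(mul0rn, addr0).
rewrite prod3E snd_mulrnE snd_addE (prod3E (x + y)) snd_mulrnE (snd_addE (prod3 x x z)).
rewrite (prod3E x x) (prod3E y y) snd_addE; apply/eqP.
by move: (x.2 0 m) (y.2 0 m) (z.2 0 m); apply: Z9_exhaust3; vm_compute.
Qed.
End Ambient.

(** * Words of order 3 *)

Section Torsion.
Variables (a b : nat) (U : {vspace 'rV['F_3]_(a + 3 * b)}).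
Local Notation A := (amb a b).
Implicit Types x y z : A.

Definition torsion_in z := z *+ 3 = 0 /\ Phi z \in U.

Lemma torsion_in0 : torsion_in 0.
Proof. by rewrite /torsion_in mul0rn Phi0 mem0v. Qed.

Lemma torsion_inD y z : torsion_in y -> torsion_in z -> torsion_in (y + z).
Proof.
move=> [y3 yU] [z3 zU]; split; first by rewrite mulrnDl y3 z3 addr0.
by rewrite PhiD_torsion // memvD.
Qed.

Lemma torsion_inMn z n : torsion_in z -> torsion_in (z *+ n).
Proof.
move=> zT; elim: n => [|n IH]; first by rewrite mulr0n; exact: torsion_in0.
by rewrite mulrS; apply: torsion_inD.
Qed.

Lemma torsion_inN z : torsion_in z -> torsion_in (- z).
Proof.
move=> zT; suff -> : - z = z *+ 2 by apply: torsion_inMn.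
by apply/eqP; rewrite eq_sym -subr_eq0 opprK -mulrSr; case: zT => ->.
Qed.

End Torsion.

Section TorsionSnd.
Variables a b : nat.
Local Notation A := (amb a b).

Definition tdelta (m : 'I_b) : A := (0, delta_mx 0 m *+ 3).

Lemma Phi_torsion_snd (z : A) : z *+ 3 = 0 ->
  Phi ((0, z.2) : A) \in <<[seq Phi (tdelta m) | m <- enum 'I_b]>>%VS.
Proof.
set U := <<_>>%VS => z3.
have tU m : torsion_in U (tdelta m).
  split; last by apply/memv_span/map_f; rewrite mem_enum.
  apply: amb_eq => [|m']; first by rewrite fst_mul3.
  by rewrite snd_mulrnE mulmxnE -mulrnA Z9_mul9 mxE.
have -> : ((0, z.2) : A) = \sum_(m < b) tdelta m *+ (z.2 0 m %/ 3).
  apply: amb_eq => [|m].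
    by rewrite fst_sum big1 // => m _; rewrite fst_mulrnE mul0rn.
  rewrite snd_sumE (bigD1 m) //= big1 ?addr0 => [|m' m'm].
    by rewrite snd_mulrnE mulmxnE mxE !eqxx -Z9_torsionE // -snd_mulrnE z3 mxE.
  by rewrite snd_mulrnE mulmxnE mxE eq_sym (negbTE m'm) !mul0rn.
suff [] : torsion_in U (\sum_(m < b) tdelta m *+ (z.2 0 m %/ 3)) by [].
by apply: big_ind => [|x y|m _]; [exact: torsion_in0 | exact: torsion_inD | exact: torsion_inMn].
Qed.
End TorsionSnd.

(** * The span of the image of an additive code *)

(* The code D of part (iii). *)
Definition span_code a b (C : {set amb a b}) : {set amb a b} :=
  [set x | Phi x \in <<enum (Phi_code C)>>%VS].

Section Code.
Variables (a b : nat) (C : {set amb a b}).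
Hypothesis C_add : is_additive_code C.
Local Notation A := (amb a b).
Local Notation S := <<enum (Phi_code C)>>%VS.
Implicit Types x y z : A.

Lemma code0 : 0 \in C. Proof. by case: C_add. Qed.

Lemma codeB x y : x \in C -> y \in C -> x - y \in C.
Proof. by case: C_add => _; apply. Qed.

Lemma codeD x y : x \in C -> y \in C -> x + y \in C.
Proof. by move=> xC yC; have := codeB xC (codeB code0 yC); rewrite sub0r opprK. Qed.

Lemma codeMn x n : x \in C -> x *+ n \in C.
Proof. by move=> xC; elim: n => [|n IH]; rewrite ?mulr0n ?code0 // mulrS codeD. Qed.

Lemma Phi_code_span c : c \in C -> Phi c \in S.
Proof. by move=> cC; rewrite memv_span // mem_enum imset_f. Qed.

Lemma carry_span x y : x \in C -> y \in C -> torsion_in S (carry x y).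
Proof.
move=> xC yC; split; first exact: carry_mul3.
have <- : Phi x + Phi y - Phi (x + y) = Phi (carry x y) by rewrite PhiD subKr.
by rewrite memvB ?memvD ?Phi_code_span ?codeD.
Qed.

Lemma prod2_span x y : x \in C -> y \in C -> torsion_in S (prod2 x y).
Proof.
move=> xC yC; rewrite prod2_carry.
by apply: torsion_inD; apply: carry_span; rewrite ?codeMn.
Qed.

Lemma prod3_span x y z : x \in C -> y \in C -> z \in C -> torsion_in S (prod3 x y z).
Proof.
have sq u w : u \in C -> w \in C -> torsion_in S (prod3 u u w).
  move=> uC wC; rewrite prod3_carry; apply: torsion_inMn.
  by apply: torsion_inD; apply: carry_span; rewrite ?codeMn.
move=> xC yC zC; rewrite prod3_polar; apply: torsion_inMn; apply: torsion_inD.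
  exact/sq/zC/codeD.
by apply: torsion_inMn; apply: torsion_inD; apply: sq.
Qed.

Lemma span_Phi_decomp w :
  w \in S -> exists c t, [/\ c \in C, torsion_in S t & w = Phi (c + t)].
Proof.
pose P w := exists c t, [/\ c \in C, torsion_in S t & w = Phi (c + t)].
have PhiDt c t : torsion_in S t -> Phi (c + t) = Phi c + Phi t.
  by case=> t3 _; rewrite addrC PhiD_torsion // addrC.
have P0 : P 0 by exists 0, 0; rewrite addr0 Phi0 code0; split=> //; apply: torsion_in0.
(* Phi c1 + Phi c2 = Phi (c1 + c2) + Phi (carry c1 c2): the carry joins the torsion part. *)
have PD w1 w2 : P w1 -> P w2 -> P (w1 + w2).
  move=> [c1 [t1 [c1C t1S ->]]] [c2 [t2 [c2C t2S ->]]].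
  have tS : torsion_in S (carry c1 c2 + (t1 + t2)).
    by apply: torsion_inD; [apply: carry_span | apply: torsion_inD].
  exists (c1 + c2), (carry c1 c2 + (t1 + t2)); split; rewrite ?codeD //.
  have [[t1_3 _] [k3 _]] := (t1S, carry_span c1C c2C).
  rewrite (PhiDt c1) // (PhiDt c2) // (PhiDt (c1 + c2)) // (PhiD c1 c2).
  by rewrite (PhiD_torsion _ k3) (PhiD_torsion _ t1_3) [RHS]addrA subrK addrACA.
have PMn w1 n : P w1 -> P (w1 *+ n).
  by move=> Pw1; elim: n => [|n IH]; rewrite ?mulr0n // mulrS; apply: PD.
move=> /coord_span ->; apply: (big_ind P) => // i _.
rewrite -[coord _ i w]natr_Zp scaler_nat; apply: PMn.
have /imsetP [c cC ->] : (enum (Phi_code C))`_i \in Phi_code C.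
  by rewrite -mem_enum mem_nth // -cardE.
by exists c, 0; rewrite addr0; split=> //; apply: torsion_in0.
Qed.

Lemma span_code_additive : is_additive_code (span_code C).
Proof.
split=> [|x y]; first by rewrite inE Phi0 mem0v.
rewrite !inE => /span_Phi_decomp [c1 [t1 [c1C t1S /Phi_inj ->]]].
move=> /span_Phi_decomp [c2 [t2 [c2C t2S /Phi_inj ->]]].
have tS : torsion_in S (t1 - t2) by apply: torsion_inD => //; apply: torsion_inN.
rewrite opprD addrACA addrC (PhiD_torsion _ tS.1).
by rewrite memvD ?tS.2 ?Phi_code_span ?codeB.
Qed.

Lemma Phi_span_code : [set w | w \in S] = Phi_code (span_code C).
Proof.
apply/setP => w; rewrite inE; apply/idP/imsetP => [wS | [x] ].
  have [c [t [_ _ wE]]] := span_Phi_decomp wS.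
  by exists (c + t); rewrite // inE -wE.
by rewrite inE => xS ->.
Qed.
End Code.

(* Unlike [is_gen_matrix], no uniqueness of the coefficients is required, so that the
   generators read off the isomorphism of [has_type] qualify as well. *)
Definition generated_by a b g d (C : {set amb a b})
    (u : 'I_g -> amb a b) (v : 'I_d -> amb a b) : Prop :=
  [/\ forall i, u i *+ 3 = 0, forall i, u i \in C, forall j, v j \in C
    & C \subset comb u v @: setT].

Definition gens a b g d (u : 'I_g -> amb a b) (v : 'I_d -> amb a b) :
    seq 'rV['F_3]_(a + 3 * b) :=
  [seq Phi (u i) | i <- enum 'I_g]
  ++ [seq Phi (v j) | j <- enum 'I_d]
  ++ [seq Phi ((cwmul (v kl.1) (v kl.2)) *+ 3)
       | kl <- enum [set kl : 'I_d * 'I_d | (kl.2 <= kl.1)%N]]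
  ++ [seq Phi ((cwmul (cwmul (v xyz.1.1) (v xyz.1.2)) (v xyz.2)) *+ 3)
       | xyz <- enum [set xyz : 'I_d * 'I_d * 'I_d |
                        (xyz.1.1 <= xyz.1.2)%N && (xyz.1.2 <= xyz.2)%N]].

Lemma size_gens a b g d (u : 'I_g -> amb a b) (v : 'I_d -> amb a b) :
  size (gens u v) = (g + d + 'C(d.+1, 2) + 'C(d.+2, 3))%N.
Proof.
rewrite !size_cat !size_map -!enumT !size_enum_ord -!cardE.
by rewrite card_leq_pairs card_leq_triples !addnA.
Qed.

Lemma dim_span_map (K : fieldType) (aT rT : vectType K) (f : 'Hom(aT, rT)) (s : seq aT) :
  (\dim <<map f s>> <= \dim <<s>>)%N.
Proof. by rewrite -limg_span -(limg_ker_dim f <<s>>) leq_addl. Qed.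

Section Generators.
Variables (a b g d : nat) (C : {set amb a b}).
Variables (u : 'I_g -> amb a b) (v : 'I_d -> amb a b).
Hypotheses (C_add : is_additive_code C) (Cuv : generated_by C u v).
Local Notation A := (amb a b).
Local Notation S := <<enum (Phi_code C)>>%VS.
Local Notation W := <<gens u v>>%VS.
Implicit Types x y z : A.

Let u_torsion i : u i *+ 3 = 0. Proof. by case: Cuv. Qed.
Let uC i : u i \in C. Proof. by case: Cuv. Qed.
Let vC j : v j \in C. Proof. by case: Cuv. Qed.

Lemma code_ind (P : A -> Prop) : P 0 ->
    (forall x y, x \in C -> y \in C -> P x -> P y -> P (x + y)) ->
    (forall i, P (u i)) -> (forall j, P (v j)) ->
  forall c, c \in C -> P c.
Proof.
move=> P0 PD Pu Pv; pose Q c := c \in C /\ P c.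
have QD x y : Q x -> Q y -> Q (x + y).
  by move=> [xC Px] [yC Py]; split; [exact: codeD | exact: PD].
have QMn x n : Q x -> Q (x *+ n).
  by move=> Qx; elim: n => [|n IH]; rewrite ?mulr0n ?mulrS; [split; rewrite ?code0 | exact: QD].
have Q0 : Q 0 by split; rewrite ?code0.
suff Qc c : c \in C -> Q c by move=> c /Qc [].
case: Cuv => _ _ _ /subsetP CS /CS /imsetP [p _ ->]; apply: (QD).
  by apply: (big_ind Q Q0 QD) => i _; apply: QMn; split.
by apply: (big_ind Q Q0 QD) => j _; apply: QMn; split.
Qed.

Lemma torsion_in_code U (F : A -> A) : (forall x y, F (x + y) = F x + F y) ->
    (forall i, F (u i) = 0) -> (forall j, torsion_in U (F (v j))) ->
  forall c, c \in C -> torsion_in U (F c).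
Proof.
move=> FD Fu Fv; apply: code_ind => [|x y _ _ Fx Fy|i|//]; last by rewrite Fu; exact: torsion_in0.
  have F0 : F 0 = 0 by apply: (addrI (F 0)); rewrite -FD !addr0.
  by rewrite F0; exact: torsion_in0.
by rewrite FD; apply: torsion_inD.
Qed.

Lemma gens_sub_span : (W <= S)%VS.
Proof.
apply/span_subvP => w; rewrite !mem_cat => /or4P [] /mapP [t _ ->].
- exact: Phi_code_span.
- exact: Phi_code_span.
- exact: (prod2_span C_add (vC t.1) (vC t.2)).2.
- exact: (prod3_span C_add (vC t.1.1) (vC t.1.2) (vC t.2)).2.
Qed.

Lemma prod2_gens j l : torsion_in W (prod2 (v j) (v l)).
Proof.
wlog lj : j l / (l <= j)%N.
  by move=> H; case: (leqP l j) => [/H // | /ltnW/H]; rewrite prod2C.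
split; first exact: prod2_mul3.
apply/memv_span; rewrite !mem_cat; apply/or4P/Or43/mapP.
by exists (j, l); rewrite // mem_enum inE.
Qed.

Lemma prod3_gens i j k : torsion_in W (prod3 (v i) (v j) (v k)).
Proof.
have sorted (i' j' k' : 'I_d) : (i' <= j' <= k')%N -> torsion_in W (prod3 (v i') (v j') (v k')).
  move=> /andP [ij jk]; split; first exact: prod3_mul3.
  apply/memv_span; rewrite !mem_cat; apply/or4P/Or44/mapP.
  by exists (i', j', k'); rewrite // mem_enum inE /= ij jk.
have [ij|ji] := leqP i j; have [jk|kj] := leqP j k.
- by apply: sorted; rewrite ij jk.
- rewrite prod3C23; have [ik|ki] := leqP i k; first by apply: sorted; rewrite ik (ltnW kj).
  by rewrite prod3C12; apply: sorted; rewrite (ltnW ki) ij.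
- rewrite prod3C12; have [ik|ki] := leqP i k; first by apply: sorted; rewrite (ltnW ji) ik.
  by rewrite prod3C23; apply: sorted; rewrite jk (ltnW ki).
- by rewrite prod3C12 prod3C23 prod3C12; apply: sorted; rewrite (ltnW kj) (ltnW ji).
Qed.

Lemma prod2_gens_code x y : x \in C -> y \in C -> torsion_in W (prod2 x y).
Proof.
move=> xC yC; apply: (torsion_in_code (F := fun x => prod2 x y) _ _ _ xC) => [x1 x2|i|j].
- exact: prod2Dl.
- exact: prod2_torsion.
apply: (torsion_in_code (F := prod2 (v j)) _ _ _ yC) => [y1 y2|i|l].
- by rewrite !(prod2C (v j)) prod2Dl.
- by rewrite prod2C prod2_torsion.
- exact: prod2_gens.
Qed.

Lemma prod3_gens_code x y z : x \in C -> y \in C -> z \in C ->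
  torsion_in W (prod3 x y z).
Proof.
move=> xC yC zC.
apply: (torsion_in_code (F := fun x => prod3 x y z) _ _ _ xC) => [x1 x2|i|i].
- exact: prod3Dl.
- exact: prod3_torsion.
apply: (torsion_in_code (F := fun y => prod3 (v i) y z) _ _ _ yC) => [y1 y2|j|j].
- by rewrite !(prod3C12 (v i)) prod3Dl.
- by rewrite prod3C12 prod3_torsion.
have rot w : prod3 (v i) (v j) w = prod3 w (v i) (v j) by rewrite prod3C23 prod3C12.
apply: (torsion_in_code (F := prod3 (v i) (v j)) _ _ _ zC) => [z1 z2|k|k].
- by rewrite !rot prod3Dl.
- by rewrite rot prod3_torsion.
- exact: prod3_gens.
Qed.

Lemma carry_gens_code x y : x \in C -> y \in C -> torsion_in W (carry x y).
Proof.
move=> xC yC; apply: torsion_inD; first apply: torsion_inD.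
- exact: prod2_gens_code.
- exact: prod3_gens_code.
- exact: prod3_gens_code.
Qed.

Lemma Phi_code_gens c : c \in C -> Phi c \in W.
Proof.
move: c; apply: code_ind => [|x y xC yC xW yW|i|j]; first by rewrite Phi0 mem0v.
- by rewrite PhiD memvB ?memvD //; case: (carry_gens_code xC yC).
- by apply/memv_span; rewrite mem_cat (map_f (fun i => Phi (u i))) ?mem_enum.
- by apply/memv_span; rewrite !mem_cat (map_f (fun j => Phi (v j))) ?mem_enum ?orbT.
Qed.

Lemma span_gens : S = W.
Proof.
apply/eqP; rewrite eqEsubv gens_sub_span andbT.
by apply/span_subvP => w; rewrite mem_enum => /imsetP [c cC ->]; apply: Phi_code_gens.
Qed.

Lemma dim_span_binomial : (\dim S <= g + d + 'C(d.+1, 2) + 'C(d.+2, 3))%N.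
Proof. by rewrite span_gens -(size_gens u v) dim_span. Qed.

(* Phi (u i) is (u i).1 padded with zeros plus Phi of a 3-torsion word with zero Z_3 part,
   and the (u i).1 lie in the projection of C_3. *)
Lemma dim_span_kappa : (\dim S <= b + d + kappa_of C)%N.
Proof.
set L1 := <<[seq row_mx (u i).1 (0 : 'rV_(3 * b)) | i <- enum 'I_g]>>%VS.
set L2 := <<[seq Phi (v j) | j <- enum 'I_d]>>%VS.
set L3 := <<[seq Phi (tdelta a m) | m <- enum 'I_b]>>%VS.
have W_sub : (W <= L1 + L3 + L2)%VS.
  have L3_sub : (L3 <= L1 + L3 + L2)%VS by apply: subv_trans (addvSr _ _) (addvSl _ _).
  have torsion_L3 z : z *+ 3 = 0 -> z.1 = 0 -> Phi z \in (L1 + L3 + L2)%VS.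
    by move=> z3 z1; rewrite Phi_split z1 row_mx0 add0r (subvP L3_sub) ?Phi_torsion_snd.
  apply/span_subvP => w; rewrite !mem_cat => /or4P [] /mapP [t _ ->].
  - rewrite Phi_split; apply: (subvP (addvSl _ _)); apply: memv_add.
      by rewrite memv_span // (map_f (fun i => row_mx (u i).1 0)) ?mem_enum.
    exact: Phi_torsion_snd.
  - apply: (subvP (addvSr _ _)).
    by rewrite memv_span // (map_f (fun j => Phi (v j))) ?mem_enum.
  - exact: torsion_L3 (prod2_mul3 _ _) (prod2_fst _ _).
  - exact: torsion_L3 (prod3_mul3 _ _ _) (prod3_fst _ _ _).
have dimL1 : (\dim L1 <= kappa_of C)%N.
  pose f : 'Hom('rV['F_3]_a, 'rV_(a + 3 * b)) := linfun (mulmxr (row_mx 1%:M 0)).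
  have -> : L1 = <<map f [seq (u i).1 | i <- enum 'I_g]>>%VS.
    rewrite -map_comp; congr <<_>>%VS; apply: eq_map => i /=.
    by rewrite lfunE /= mul_mx_row mulmx1 mulmx0.
  apply: leq_trans (dim_span_map _ _) (dimvS (sub_span _)) => _ /mapP [i _ ->].
  by apply/mapP; exists (u i); rewrite // mem_enum inE uC u_torsion eqxx.
have dimL2 : (\dim L2 <= d)%N by rewrite (leq_trans (dim_span _)) // size_map size_enum_ord.
have dimL3 : (\dim L3 <= b)%N by rewrite (leq_trans (dim_span _)) // size_map size_enum_ord.
have := leq_of_leqif (dimv_add_leqif (L1 + L3) L2).
have := leq_of_leqif (dimv_add_leqif L1 L3).
have := dimvS W_sub; rewrite -span_gens; lia.
Qed.

End Generators.

Lemma amb_sum_delta a b (x : amb a b) :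
  x = \sum_(i < a) ((delta_mx 0 i, 0) : amb a b) *+ x.1 0 i
      + \sum_(m < b) ((0, delta_mx 0 m) : amb a b) *+ x.2 0 m.
Proof.
apply: amb_eq => [|m].
  rewrite fstD !fst_sum [X in _ + X]big1 ?addr0 => [|m _]; last first.
    by rewrite fst_mulrnE /= mul0rn.
  rewrite [LHS]row_sum_delta; apply: eq_bigr => i _.
  by rewrite fst_mulrnE -scaler_nat natr_Zp.
rewrite snd_addE !snd_sumE [X in X + _]big1 ?add0r => [|i _]; last first.
  by rewrite snd_mulrnE /= mxE mul0rn.
rewrite (bigD1 m) //= big1 ?addr0 => [|m' m'm].
  by rewrite snd_mulrnE mxE !eqxx /= natr_Zp.
by rewrite snd_mulrnE mxE eq_sym (negbTE m'm) mul0rn.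
Qed.

Section TypeGenerators.
Variables (a b g d : nat) (C : {set amb a b}) (f : amb g d -> amb a b).
Hypotheses (fD : forall x y, f (x + y) = f x + f y) (fC : f @: setT = C).

Let f0 : f 0 = 0.
Proof. by apply: (addrI (f 0)); rewrite -fD !addr0. Qed.

Let f_sum I r (P : pred I) F : f (\sum_(i <- r | P i) F i) = \sum_(i <- r | P i) f (F i).
Proof. exact: (big_morph f fD f0). Qed.

Let f_mulrn x n : f (x *+ n) = f x *+ n.
Proof. by elim: n => [|n IH]; rewrite ?mulr0n ?f0 // !mulrS fD IH. Qed.

Lemma has_type_generated :
  generated_by C (fun i => f (delta_mx 0 i, 0)) (fun m => f (0, delta_mx 0 m)).
Proof.
have fC' x : f x \in C by rewrite -fC imset_f ?inE.
split=> // [i|].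
  rewrite -f_mulrn -[RHS]f0; congr f.
  by apply: amb_eq => [|m]; rewrite ?fst_mul3 // snd_mulrnE /= !mxE mul0rn.
apply/subsetP => c; rewrite -fC => /imsetP [x _ ->].
apply/imsetP; exists ([ffun i => x.1 0 i : 'Z_3], [ffun m => x.2 0 m]) => //.
by rewrite {1}[x]amb_sum_delta fD !f_sum /comb; congr (_ + _); apply: eq_bigr => i _;
  rewrite f_mulrn ffunE.
Qed.

Hypothesis f_inj : injective f.

Lemma card_code_type : #|C| = (3 ^ (g + 2 * d))%N.
Proof.
by rewrite -fC card_imset // cardsT card_prod !card_mx card_Fp // card_ord !mul1n expnD expnM.
Qed.
End TypeGenerators.

Lemma gen_matrix_generated a b g d (C : {set amb a b}) (u : 'I_g -> amb a b) (v : 'I_d -> amb a b) :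
  is_gen_matrix C u v -> generated_by C u v.
Proof.
case=> u3 _ _ Cuv; have combC p : comb u v p \in C by rewrite -Cuv imset_f ?inE.
split=> [i|i|m|]; last by rewrite Cuv.
- by case: (u3 i).
- have -> : u i = comb u v ([ffun i' => (i' == i)%:R], 0).
    rewrite /comb (bigD1 i) //= ffunE eqxx big1 => [|i' i'i]; last first.
      by rewrite ffunE (negbTE i'i).
    by rewrite big1 ?addr0 // => m _; rewrite ffunE.
  exact: combC.
- have -> : v m = comb u v (0, [ffun m' => (m' == m)%:R]).
    rewrite /comb big1 ?add0r => [|i _]; last by rewrite ffunE.
    rewrite (bigD1 m) //= ffunE eqxx big1 ?addr0 // => m' m'm.
    by rewrite ffunE (negbTE m'm).
  exact: combC.
Qed.

Lemma card_le_rank3 n (X : {set 'rV['F_3]_n}) : (#|X| <= 3 ^ rank3 X)%N.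
Proof.
apply: (@leq_trans #|<<enum X>>%VS|); last by rewrite card_vspace card_Fp.
by apply/subset_leq_card/subsetP => w wX; rewrite memv_span ?mem_enum.
Qed.

Theorem theorem5 (a b g d k : nat) (C : {set amb a b}) :
  (0 < a + b)%N -> has_type g d k C ->
  (* (i) *)
  (forall (u : 'I_g -> amb a b) (v : 'I_d -> amb a b),
     is_gen_matrix C u v ->
     <<enum (Phi_code C)>>%VS =
     <<[seq Phi (u i) | i <- enum 'I_g]
       ++ [seq Phi (v j) | j <- enum 'I_d]
       ++ [seq Phi ((cwmul (v kl.1) (v kl.2)) *+ 3)
            | kl <- enum [set kl : 'I_d * 'I_d | (kl.2 <= kl.1)%N]]
       ++ [seq Phi ((cwmul (cwmul (v xyz.1.1) (v xyz.1.2)) (v xyz.2)) *+ 3)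
            | xyz <- enum [set xyz : 'I_d * 'I_d * 'I_d |
                             (xyz.1.1 <= xyz.1.2)%N && (xyz.1.2 <= xyz.2)%N]]>>%VS)
  /\
  (* (ii) *)
  ((g + 2 * d <= rank3 (Phi_code C))%N /\
   (rank3 (Phi_code C) <= minn (b + d + k) (g + d + 'C(d.+1, 2) + 'C(d.+2, 3)))%N)
  /\
  (* (iii) *)
  (exists D : {set amb a b}, is_additive_code D /\
     [set x | x \in <<enum (Phi_code C)>>%VS] = Phi_code D).
Proof.
move=> _ [C_add [f [fD f_inj fC]] ->].
have Cgen := has_type_generated fD fC.
split; [|split; [split|]].
- by move=> u v /gen_matrix_generated Cuv; apply: span_gens.
- rewrite -(leq_exp2l _ _ (isT : 1 < 3)%N) -(card_code_type fC f_inj).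
  by rewrite -(card_imset _ (@Phi_inj a b)) card_le_rank3.
- by rewrite /rank3 leq_min (dim_span_kappa C_add Cgen) (dim_span_binomial C_add Cgen).
- by exists (span_code C); split; [apply: span_code_additive | apply: Phi_span_code].
Qed.
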